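(* There is some real $\alpha>1/2$ and an open subset $U\subseteq\mathbb{C}$ such that $\mathcal{M}\cap U$ is equal to the interval $[1/2,\alpha)$.
   Context: For $z\in\mathbb{D}^*=\{0<|z|<1\}$, $f(x)=zx$, $g(x)=z(x-1)+1$, $\Lambda_z$ is the unique nonempty compact subset of $\mathbb{C}$ with $\Lambda_z=f(\Lambda_z)\cup g(\Lambda_z)$, and $\mathcal{M}=\{z\in\mathbb{D}^*:\Lambda_z\text{ connected}\}$. *)

From HB Require Import structures.
From mathcomp Require Import all_boot all_order all_algebra.
From mathcomp Require Import all_classical all_reals all_analysis.
From mathcomp Require Import complex.
Set Implicit Arguments. Unset Strict Implicit. Unset Printing Implicit Defensive.
Import Order.TTheory GRing.Theory Num.Theory ComplexField.
Import numFieldNormedType.Exports.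
Local Open Scope classical_set_scope.
Local Open Scope ring_scope.

HB.instance Definition _ (R : realType) :=
  PseudoPointedMetric.copy R[i] (R[i])^o.

Definition punct_disc (R : realType) : set R[i] :=
  [set z | 0 < `|z| < 1].

Definition fz (R : realType) (z : R[i]) (x : R[i]) : R[i] := z * x.
Definition gz (R : realType) (z : R[i]) (x : R[i]) : R[i] := z * (x - 1) + 1.

Definition is_attractor (R : realType) (z : R[i]) (L : set R[i]) : Prop :=
  L !=set0 /\ compact L /\ L = fz z @` L `|` gz z @` L.

(* M = { z in D^* : Lambda_z connected }; Lambda_z is the unique
   attractor, so we quantify over the (unique) attractor. *)
Definition Mset (R : realType) : set R[i] :=
  [set z | punct_disc z /\ exists L, is_attractor z L /\ connected L].

From HB Require Import structures.
From mathcomp Require Import all_boot all_order all_algebra.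
From mathcomp Require Import all_classical all_reals all_analysis.
From mathcomp Require Import complex.
From mathcomp Require Import ring lra.
Import Order.TTheory GRing.Theory Num.Theory ComplexField Normc.
Import numFieldNormedType.Exports.
Local Open Scope classical_set_scope.
Local Open Scope ring_scope.

(* If the attractor Λ of z is connected, then f(Λ) and g(Λ) overlap, i.e.
   z (a - b) = 1 - z for some a, b in Λ.  Since Λ lies in the disc about 1/2
   of radius m <= |1 - z| / (2 (1 - |z|)), this forces |z| >= 1/2 and rules out
   real z < 1/2.  For non-real z near 1/2 expand a and b once more: in three of
   the four cases z^2 (a' - b') has real part above 0.49, more than
   |z|^2 diam Λ <= 0.29; in the fourth, z^2 (a' - b') = (1 - z)^2 makes
   |Im (a' - b')| larger than 6 |Im z|, whereas Λ lies in a strip |Im w| <= M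
   with M <= 2.2 |Im z|.  For real z in [1/2, 1) the attractor is the segment
   [0, 1]. *)

Section ComplexModulus.
Local Open Scope complex_scope.
Context {R : realType}.
Implicit Types a b w : R[i].

Lemma normcE w : `|w| = (normc w)%:C.
Proof. by case: w => x y; rewrite normc_def. Qed.

Lemma normc_ge0 w : 0 <= normc w.
Proof. by case: w => x y; exact: sqrtr_ge0. Qed.

Lemma normc_real (x : R) : normc x%:C = `|x|.
Proof. by rewrite /= expr0n addr0 sqrtr_sqr. Qed.

Lemma normc_sqr w : normc w ^+ 2 = complex.Re w ^+ 2 + complex.Im w ^+ 2.
Proof. by case: w => x y; rewrite sqr_sqrtr // addr_ge0 ?sqr_ge0. Qed.

Lemma normc_Re w : `|complex.Re w| <= normc w.
Proof. by case: w => x y /=; rewrite -sqrtr_sqr ler_wsqrtr // lerDl sqr_ge0. Qed.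

Lemma normc_Im w : `|complex.Im w| <= normc w.
Proof. by case: w => x y /=; rewrite -sqrtr_sqr ler_wsqrtr // lerDr sqr_ge0. Qed.

Lemma normc_dist a b : `|normc a - normc b| <= normc (a - b).
Proof. exact: (@ler_dist_dist _ (Rcomplex R)). Qed.

Lemma complex_half : (1 / 2 : R[i]) = (1 / 2 : R)%:C.
Proof. by rewrite rmorphM rmorph1 fmorphV /= rmorphD rmorph1. Qed.

Lemma normc_half w : normc (w / 2) = normc w / 2.
Proof.
rewrite mulrC -[2^-1]mul1r complex_half normcM normc_real ger0_norm //.
by rewrite mul1r mulrC.
Qed.

Lemma normc_sub_le_double {a b c m} :
  normc (a - c) <= m -> normc (b - c) <= m -> normc (a - b) <= 2 * m.
Proof.
move=> ac bc; have -> : a - b = (a - c) + - (b - c) by ring.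
by rewrite (le_trans (le_normcD _ _)) // normcN; lra.
Qed.

End ComplexModulus.

Section ComplexTopology.
Local Open Scope complex_scope.
Context {R : realType}.

Lemma ball_complexE (c w e : R[i]) : ball c e w = (`|c - w| < e).
Proof. by []. Qed.

Lemma complex_hausdorff : hausdorff_space R[i].
Proof. exact: (@norm_hausdorff _ R[i]^o). Qed.

Lemma continuous_fz (z : R[i]) : continuous (fz z).
Proof.
move=> x; apply: (@continuousM _ R[i]^o (fun=> z) id x) => //.
exact: cst_continuous.
Qed.

Lemma continuous_gz (z : R[i]) : continuous (gz z).
Proof.
move=> x; apply: (@continuousD _ R[i]^o _ (fun a : R[i]^o => z * (a - 1)) (fun=> 1) x).
  apply: (@continuousM _ R[i]^o (fun=> z) (fun a : R[i]^o => a - 1) x).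
    exact: cst_continuous.
  by apply: (@continuousB _ R[i]^o _ id (fun=> 1) x) => //; exact: cst_continuous.
exact: cst_continuous.
Qed.

Lemma continuous_real_complex : continuous (fun t : R => t%:C : R[i]).
Proof.
move=> x; apply/cvg_ballP => e e0.
have e0' : 0 < complex.Re e by move: e0; rewrite ltcE => /andP[].
apply/nbhs_ballP; exists (complex.Re e) => // t /= xt.
rewrite ball_complexE -rmorphB normcE normc_real.
by move: e0; rewrite !ltcE /= => /andP[/eqP -> _]; rewrite eqxx.
Qed.

Lemma ball_half_bounds (x y e : R) : ball (1 / 2 : R[i]) e%:C (x +i* y) ->
  `|x - 1 / 2| < e /\ `|y| < e.
Proof.
rewrite ball_complexE normcE ltcR complex_half => near; split.
- rewrite distrC; apply: le_lt_trans near.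
  exact: (normc_Re ((1 / 2)%:C - (x +i* y))).
- rewrite -normrN -[- y]add0r; apply: le_lt_trans near.
  exact: (normc_Im ((1 / 2)%:C - (x +i* y))).
Qed.

Lemma ball_half_real (x e : R) : `|x - 1 / 2| < e -> ball (1 / 2 : R[i]) e%:C x%:C.
Proof. by rewrite ball_complexE normcE ltcR complex_half -rmorphB normc_real distrC. Qed.

Lemma continuous_real_of_lipschitz (f : R[i] -> R) :
  (forall a b, `|f a - f b| <= normc (a - b)) -> continuous f.
Proof.
move=> f_lip x; apply/(@cvg_ballP _ _ _ _ (@nbhs_filter _ x)) => e e0.
exists e%:C; first by rewrite /= ltcR.
by move=> a /=; rewrite normcE ltcR; exact: le_lt_trans.
Qed.

End ComplexTopology.

Section Attractor.
Local Open Scope complex_scope.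
Context {R : realType}.
Context {z : R[i]} {L : set R[i]}.
Hypothesis attrL : is_attractor z L.

Lemma attractor_preimage {a} : L a -> exists2 a', L a' & a = fz z a' \/ a = gz z a'.
Proof.
have [_ [_ eL]] := attrL; rewrite [in L a]eL => -[] [a' La' <-]; exists a' => //.
- by left.
- by right.
Qed.

Lemma attractor_argmax {phi : R[i] -> R} : continuous phi ->
  exists2 a0, L a0 & forall a, L a -> phi a <= phi a0.
Proof.
have [L0 [cL _]] := attrL => phi_cont.
have [a0 /set_mem La0 a0_max] :=
  compact_EVT_max L0 cL (continuous_subspaceT phi_cont).
by exists a0 => // a La; apply: a0_max; exact: mem_set.
Qed.

Lemma attractor_radius : exists2 m,
  forall a, L a -> normc (a - 1 / 2) <= m & m <= normc z * m + normc (1 - z) / 2.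
Proof.
have dist_cont : continuous (fun a : R[i] => normc (a - 1 / 2)).
  apply: continuous_real_of_lipschitz => a b.
  by have := normc_dist (a - 1 / 2) (b - 1 / 2); rewrite opprB addrA subrK.
have [a0 La0 a0_max] := attractor_argmax dist_cont.
exists (normc (a0 - 1 / 2)) => //.
have [a La ea] := attractor_preimage La0.
suff : normc (a0 - 1 / 2) <= normc z * normc (a - 1 / 2) + normc (1 - z) / 2.
  by move/le_trans; apply; rewrite lerD2r ler_wpM2l ?normc_ge0 ?a0_max.
case: ea => ->; rewrite /fz /gz.
- have -> : z * a - 1 / 2 = z * (a - 1 / 2) + - ((1 - z) / 2) by ring.
  by rewrite (le_trans (le_normcD _ _)) // normcN normcM normc_half.
- have -> : z * (a - 1) + 1 - 1 / 2 = z * (a - 1 / 2) + (1 - z) / 2 by field.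
  by rewrite (le_trans (le_normcD _ _)) // normcM normc_half.
Qed.

Lemma attractor_height {m} : (forall a, L a -> normc (a - 1 / 2) <= m) ->
  exists2 M, forall a, L a -> `|complex.Im a| <= M &
    M <= `|complex.Re z| * M + `|complex.Im z| * (m + 1 / 2).
Proof.
move=> Lm.
have absIm_cont : continuous (fun a : R[i] => `|complex.Im a|).
  apply: continuous_real_of_lipschitz => a b; apply: le_trans (normc_Im _).
  by case: a b => [u v] [u' v'] /=; exact: ler_dist_dist.
have [a0 La0 a0_max] := attractor_argmax absIm_cont.
exists `|complex.Im a0| => //.
have [a La ea] := attractor_preimage La0.
have Re_a : `|complex.Re a - 1 / 2| <= m.
  apply: le_trans (Lm a La); rewrite complex_half.
  by case: a {La ea} => u v; exact: (normc_Re (u +i* v - (1 / 2)%:C)).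
have Im_a := a0_max a La.
case: ea Im_a => -> Im_a; rewrite /fz /gz.
all: case: z a {La a0 La0 a0_max} Re_a Im_a => [p q] [u v] /= Re_a Im_a.
all: rewrite ?subr0 ?addr0 in Im_a *; apply: le_trans (ler_normD _ _) _.
all: rewrite !normrM.
all: apply: lerD; apply: ler_wpM2l => //.
all: move: Re_a; rewrite !ler_norml => /andP[? ?].
all: by apply/andP; split; lra.
Qed.

Lemma connected_attractor_overlap : connected L ->
  exists a b, [/\ L a, L b & fz z a = gz z b].
Proof.
move=> connL; apply: contrapT => no_overlap.
have [[l0 Ll0] [cL eL]] := attrL.
have closure_image (h : R[i] -> R[i]) : continuous h -> h @` L = closure (h @` L).
  move=> h_cont; apply/closure_id; apply: compact_closed; first exact: complex_hausdorff.
  by apply: continuous_compact => //; exact: continuous_subspaceT.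
have disj : fz z @` L `&` gz z @` L = set0.
  apply/seteqP; split => // w [[a La <-] [b Lb fab]].
  by apply: no_overlap; exists a, b.
have sep : separated (fz z @` L) (gz z @` L).
  rewrite /separated -(closure_image _ (continuous_fz z)).
  by rewrite -(closure_image _ (continuous_gz z)).
have L_cover : L `<=` fz z @` L `|` gz z @` L by rewrite -eL.
have [L_sub|L_sub] := connected_subset sep L_cover connL.
- have : (fz z @` L `&` gz z @` L) (gz z l0).
    by split; [apply: L_sub; rewrite eL; right|]; exists l0.
  by rewrite disj.
- have : (fz z @` L `&` gz z @` L) (fz z l0).
    by split; [|apply: L_sub; rewrite eL; left]; exists l0.
  by rewrite disj.
Qed.

Lemma connected_attractor_second_overlap : connected L -> exists a b,
  [/\ L a, L b & z ^+ 2 * (a - b) \in [:: 1 - z; 1 - z ^+ 2; (1 - z) ^+ 2]].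
Proof.
move=> /connected_attractor_overlap[a [b [La Lb fab]]].
have [a' La' ea] := attractor_preimage La; have [b' Lb' eb] := attractor_preimage Lb.
exists a', b'; split => //; rewrite !inE.
have expand w : z ^+ 2 * (a' - b') - w = fz z a - gz z b -> z ^+ 2 * (a' - b') == w.
  by rewrite fab subrr => /eqP; rewrite subr_eq0.
apply/or3P; case: ea eb expand => -> [] -> expand.
- by constructor 1; apply: expand; rewrite /fz /gz; ring.
- by constructor 2; apply: expand; rewrite /fz /gz; ring.
- by constructor 3; apply: expand; rewrite /fz /gz; ring.
- by constructor 1; apply: expand; rewrite /fz /gz; ring.
Qed.

End Attractor.

Lemma Mset_normc_ge_half {R : realType} {z : R[i]} : Mset z -> 1 / 2 <= normc z.
Proof.
move=> [/andP[_]]; rewrite normcE ltcR => z_lt1 [L [attrL connL]].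
have [m Lm m_le] := attractor_radius attrL.
have [a [b [La Lb fab]]] := connected_attractor_overlap attrL connL.
have diam := normc_sub_le_double (Lm a La) (Lm b Lb).
have n1z_eq : normc (1 - z) = normc z * normc (a - b).
  by rewrite -normcM mulrBr; congr normc; move: fab; rewrite /fz /gz => ->; ring.
have n1z_gt0 : 0 < normc (1 - z).
  have := le_normcD z (1 - z); rewrite addrC subrK normc1; lra.
have n1z_le : normc (1 - z) <= normc z * (2 * m).
  by rewrite n1z_eq ler_wpM2l ?normc_ge0.
have m_gt0 : 0 < m.
  rewrite ltNge; apply/negP => m_le0.
  by have := mulr_ge0_le0 (normc_ge0 z) (_ : 2 * m <= 0); lra.
nra.
Qed.

Section UnitSegment.
Local Open Scope complex_scope.
Context {R : realType}.

Definition unit_segment : set R[i] := [set t%:C | t in `[0, 1]].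

Lemma unit_segmentP (t : R) : 0 <= t <= 1 -> unit_segment t%:C.
Proof. by move=> t01; exists t => //=; rewrite in_itv. Qed.

Lemma unit_segment_connected : connected unit_segment.
Proof.
apply: connected_continuous_connected.
  by apply/connected_intervalP; exact: interval_is_interval.
exact/continuous_subspaceT/continuous_real_complex.
Qed.

Lemma unit_segment_compact : compact unit_segment.
Proof.
apply: continuous_compact; last exact: segment_compact.
exact/continuous_subspaceT/continuous_real_complex.
Qed.

Lemma unit_segment_attractor (x : R) : 1 / 2 <= x <= 1 ->
  is_attractor x%:C unit_segment.
Proof.
move=> /andP[x_ge x_le]; have x_gt0 : 0 < x by lra.
split; first by exists 0; apply: unit_segmentP; lra.
split; first exact: unit_segment_compact.
apply/seteqP; split => w.
- move=> [t /=]; rewrite in_itv /= => /andP[t_ge0 t_le1] <-.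
  have [t_le|t_gt] := leP t x.
  + left; exists (t / x)%:C.
      by apply: unit_segmentP; rewrite ler_pdivrMr // mul1r t_le andbT divr_ge0 // ltW.
    by rewrite /fz -rmorphM mulrC divfK ?gt_eqF.
  + right; exists ((t - 1 + x) / x)%:C.
      by apply: unit_segmentP; apply/andP; split; [apply: divr_ge0 | rewrite ler_pdivrMr // mul1r]; lra.
    rewrite /gz -rmorphB -rmorphM -rmorphD; congr (_%:C).
    by field; rewrite gt_eqF.
- move=> [] [a [t /=]]; rewrite in_itv /= => /andP[t_ge0 t_le1] <- <-.
  + rewrite /fz -rmorphM; apply: unit_segmentP.
    apply/andP; split; nra.
  + rewrite /gz -rmorphB -rmorphM -rmorphD; apply: unit_segmentP.
    apply/andP; split; nra.
Qed.

Lemma real_in_Mset (x : R) : 1 / 2 <= x < 1 -> Mset x%:C.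
Proof.
move=> /andP[x_ge x_lt]; split.
  by rewrite /punct_disc /= normcE normc_real ltcR ltcR gtr0_norm ?x_lt ?andbT; lra.
exists unit_segment; split; last exact: unit_segment_connected.
by apply: unit_segment_attractor; rewrite x_ge ltW.
Qed.

End UnitSegment.

(* Multiplying by the square of the conjugate of z gives
   |z|^4 d = ((1 - z) conj z)^2 = (Re z - |z|^2 - i Im z)^2. *)
Lemma Im_sqr_ratio {R : realType} (z d : R[i]) : z ^+ 2 * d = (1 - z) ^+ 2 ->
  (normc z ^+ 2) ^+ 2 * complex.Im d =
    - 2 * (complex.Re z - normc z ^+ 2) * complex.Im z.
Proof.
rewrite normc_sqr; case: z d => [x y] [u v] /eqP.
rewrite eq_complex /= => /andP[/eqP E1 /eqP E2].
transitivity ((x * x - y * y) * ((x * x - y * y) * v + (x * y + y * x) * u)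
  - (x * y + y * x) * ((x * x - y * y) * u - (x * y + y * x) * v)); first ring.
by rewrite E1 E2; ring.
Qed.

Section NearHalf.
Local Open Scope complex_scope.
Context {R : realType}.
Context {x y : R}.
Hypotheses (x_near : `|x - 1 / 2| < 1 / 100) (y_small : `|y| < 1 / 100).
Local Notation z := (x +i* y).

Let x_bounds : 49 / 100 < x < 51 / 100.
Proof. by move: x_near; rewrite ltr_norml => /andP[? ?]; apply/andP; split; lra. Qed.

Let y_sqr_small : y ^+ 2 < 1 / 10000.
Proof. by move: y_small; rewrite ltr_norml expr2 => /andP[? ?]; nra. Qed.

Let normc_z_sqr : normc z ^+ 2 <= 2602 / 10000.
Proof.
rewrite normc_sqr /=; have := y_sqr_small; case/andP: x_bounds => ? ?.
by rewrite !expr2; nra.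
Qed.

Let normc_z : normc z <= 13 / 25.
Proof. by have := normc_z_sqr; have := normc_ge0 z; rewrite expr2; nra. Qed.

Let normc_1z : normc (1 - z) <= 13 / 25.
Proof.
have := normc_ge0 (1 - z); have := normc_sqr (1 - z) => /= n1z_sqr.
have := y_sqr_small; case/andP: x_bounds => ? ?.
by rewrite !expr2 in n1z_sqr *; nra.
Qed.

Lemma near_half_radius_le m : m <= normc z * m + normc (1 - z) / 2 -> m <= 13 / 24.
Proof.
move=> m_le; have [m_le0|m_gt0] := leP m 0; first lra.
by have := ler_wpM2r (ltW m_gt0) normc_z; have := normc_1z; lra.
Qed.

Lemma near_half_Re_lt {m d w} :
  m <= 13 / 24 -> normc d <= 2 * m -> z ^+ 2 * d = w -> complex.Re w < 49 / 100.
Proof.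
move=> m_le d_le <-; apply: le_lt_trans (ler_norm _) _.
apply: le_lt_trans (normc_Re _) _; rewrite normcM expr2 normcM -expr2.
by have := ler_wpM2r (normc_ge0 d) normc_z_sqr; lra.
Qed.

Lemma near_half_Im_vanish {m M d} : m <= 13 / 24 ->
  M <= `|x| * M + `|y| * (m + 1 / 2) -> `|complex.Im d| <= 2 * M ->
  z ^+ 2 * d = (1 - z) ^+ 2 -> y = 0.
Proof.
move=> m_le M_le d_le /Im_sqr_ratio; rewrite normc_sqr /=.
set r := x ^+ 2 + y ^+ 2 => Im_eq.
have [x_gt x_lt] := andP x_bounds.
have r_le : r <= 2602 / 10000 by have := normc_z_sqr; rewrite normc_sqr.
have r_ge0 : 0 <= r by rewrite addr_ge0 ?sqr_ge0.
have M_ge0 : 0 <= M by have := normr_ge0 (complex.Im d); lra.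
have M_bound : M * (49 / 100) <= `|y| * (25 / 24).
  have : M * (49 / 100) <= M * (1 - x) by rewrite ler_wpM2l //; lra.
  have : `|y| * (m + 1 / 2) <= `|y| * (25 / 24) by rewrite ler_wpM2l //; lra.
  by rewrite gtr0_norm in M_le; lra.
have abs_eq : r ^+ 2 * `|complex.Im d| = 2 * (x - r) * `|y|.
  have := congr1 Num.norm Im_eq; rewrite /= !normrM normrN (ger0_norm r_ge0) -expr2.
  by rewrite (ger0_norm (_ : 0 <= 2)) // (ger0_norm (_ : 0 <= x - r)) //; lra.
have r2_le : r ^+ 2 <= 678 / 10000 by rewrite expr2; nra.
have r2Imd_le := ler_wpM2l (sqr_ge0 r) d_le.
have r2M_le : r ^+ 2 * (2 * M) <= 678 / 10000 * (2 * M).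
  by apply: ler_wpM2r => //; lra.
have xr_y_ge : 2298 / 10000 * `|y| <= (x - r) * `|y|.
  by apply: ler_wpM2r => //; lra.
by apply/normr0_eq0/le_anti; rewrite normr_ge0 andbT; lra.
Qed.

Lemma near_half_Mset_real : Mset z -> y = 0.
Proof.
move=> [_ [L [attrL connL]]].
have [m Lm /near_half_radius_le m_le] := attractor_radius attrL.
have [M LM M_le] := attractor_height attrL Lm.
have [a [b [La Lb]]] := connected_attractor_second_overlap attrL connL.
have ab_le := normc_sub_le_double (Lm a La) (Lm b Lb).
rewrite !inE => /or3P[] /eqP ab_eq.
- by have := near_half_Re_lt m_le ab_le ab_eq; case/andP: x_bounds => /=; lra.
- have := near_half_Re_lt m_le ab_le ab_eq; case/andP: x_bounds => /=.
  by rewrite -!expr2; have := sqr_ge0 y; nra.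
- apply: near_half_Im_vanish m_le M_le _ ab_eq.
  have -> : complex.Im (a - b) = complex.Im a - complex.Im b.
    by case: a b {La Lb ab_le} => ? ? [].
  by apply: le_trans (ler_normB _ _) _; have := LM a La; have := LM b Lb; lra.
Qed.

End NearHalf.

Theorem lemma10p1p1 (R : realType) :
  exists alpha : R, 1/2 < alpha /\
  exists U : set R[i], open U /\
    @Mset R `&` U = [set z : R[i] | exists x : R, 1/2 <= x < alpha /\ z = (x%:C)%C].
Proof.
exists (1/2 + 1/100); split; first lra.
exists (ball (1/2 : R[i]) (1/100 : R)%:C%C); split.
  by apply: ball_open; rewrite ltcR; lra.
apply/seteqP; split.
- move=> [x y] [Mz /ball_half_bounds[x_near y_small]].
  have y0 := near_half_Mset_real x_near y_small Mz; subst y.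
  have /andP[x_gt x_lt] : 49/100 < x < 1/2 + 1/100.
    by move: x_near; rewrite ltr_norml => /andP[? ?]; apply/andP; split; lra.
  have := Mset_normc_ge_half Mz; rewrite normc_real gtr0_norm; last lra.
  by move=> x_ge; exists x; rewrite x_ge x_lt.
- move=> _ [x [/andP[x_ge x_lt] ->]]; split.
    by apply: real_in_Mset; rewrite x_ge /=; lra.
  by apply: ball_half_real; rewrite ltr_norml; apply/andP; split; lra.
Qed.
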